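(* Let $D=(V,E;s,t)$, $N$ be as in the context and let $\widetilde\Gamma_D=(N,\tilde\gamma)$ be the auxiliary game. Then $\mathcal{C}(\widetilde\Gamma_D)$ is the convex hull of the incidence vectors (in $\mathbb{R}^N$) of the minimum $s$-$t$ cuts constrained to $N$.
   Context: $D=(V,E;s,t)$ is a directed network with unit arc capacities (parallel arcs allowed); $N\subseteq E$ is the set of private arcs (players), $M=E\setminus N$ public arcs; every $s$-$t$ path contains an arc of $N$ and every arc lies on some $s$-$t$ path. For $S\subseteq N$, $\gamma(S)$ is the maximum number of pairwise arc-disjoint $s$-$t$ paths in $D_S=(V,S\cup M;s,t)$. $\sigma_N$ is the maximum number of $s$-$t$ paths pairwise sharing no arc of $N$. An $s$-$t$ cut constrained to $N$ is a set of arcs contained in $N$ meeting every $s$-$t$ path; it is minimum if of minimum cardinality. The auxiliary game $\widetilde\Gamma_D=(N,\tilde\gamma)$ has $\tilde\gamma(N)=\sigma_N$ and $\tilde\gamma(S)=\gamma(S)$ for $S\subsetneq N$. $\mathcal{C}(\widetilde\Gamma_D)=\{x\in\mathbb{R}^N_{\ge0}:x(N)=\sigma_N,\ x(S)\ge\tilde\gamma(S)\ \forall S\subseteq N\}$, where $x(S)=\sum_{i\in S}x_i$. *)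

From mathcomp Require Import all_boot all_order all_algebra.
From mathcomp Require Import boolp reals.
Set Implicit Arguments. Unset Strict Implicit. Unset Printing Implicit Defensive.
Import Order.TTheory GRing.Theory Num.Theory.

(* A directed multigraph: finite vertex type V, finite arc type E (parallel arcs
   allowed: distinct arcs may share endpoints), arc e goes from src e to tgt e.
   Every arc has unit capacity. *)

Section Network.
Variables (V E : finType) (src tgt : E -> V) (s t : V).

Fixpoint walk_to_t (v : V) (p : seq E) : bool :=
  if p is e :: p' then (src e == v) && walk_to_t (tgt e) p' else v == t.

Definition st_path (p : seq E) : bool :=
  walk_to_t s p && uniq (s :: map tgt p).

Definition st_path_in (A : {set E}) (p : seq E) : bool :=
  st_path p && all (mem A) p.

Definition has_disjoint_paths (A : {set E}) (k : nat) : Prop :=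
  exists P : seq (seq E),
    size P = k /\ all (st_path_in A) P /\
    (forall i j, i < size P -> j < size P -> i != j ->
       [disjoint (mem (nth [::] P i)) & (mem (nth [::] P j))]).

Definition has_N_disjoint_paths (N : {set E}) (k : nat) : Prop :=
  exists P : seq (seq E),
    size P = k /\ all st_path P /\
    (forall i j, i < size P -> j < size P -> i != j ->
       [disjoint [predI (mem (nth [::] P i)) & mem N] &
                 [predI (mem (nth [::] P j)) & mem N]]).

(* Under the
   standing hypotheses (s <> t) every such family has at most #|E| members,
   so the bounded maximum below is the true maximum. *)
Definition maxflow (A : {set E}) : nat :=
  \max_(k < #|E|.+1 | `[< has_disjoint_paths A k >]) k.

(* gamma(S) = maximum number of arc-disjoint s-t paths in D_S = (V, S u M) *)
Definition gamma (N S : {set E}) : nat := maxflow (S :|: ~: N).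

(* sigma_N (at most |N| <= |E| under the standing hypotheses) *)
Definition sigmaN (N : {set E}) : nat :=
  \max_(k < #|E|.+1 | `[< has_N_disjoint_paths N k >]) k.

Definition gamma_tilde (N S : {set E}) : nat :=
  if S == N then sigmaN N else gamma N S.

Definition N_cut (N C : {set E}) : Prop :=
  C \subset N /\ forall p, st_path p -> has (mem C) p.

Definition min_N_cut (N C : {set E}) : Prop :=
  N_cut N C /\ forall C', N_cut N C' -> #|C| <= #|C'|.

(* players = private arcs *)
Definition player (N : {set E}) := {e : E | e \in N}.

Variable R : realType.
Local Open Scope ring_scope.

Definition xsum (N : {set E}) (x : {ffun player N -> R}) (S : {set E}) : R :=
  \sum_(i : player N | val i \in S) x i.

Definition incid (N : {set E}) (C : {set E}) : {ffun player N -> R} :=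
  [ffun i : player N => if val i \in C then 1 else 0].

Definition in_core (N : {set E}) (x : {ffun player N -> R}) : Prop :=
  (forall i, 0 <= x i) /\ xsum x N = (sigmaN N)%:R /\
  (forall S : {set E}, S \subset N -> (gamma_tilde N S)%:R <= xsum x S).

Definition in_conv_min_cuts (N : {set E}) (x : {ffun player N -> R}) : Prop :=
  exists lam : {set E} -> R,
    (forall C, 0 <= lam C) /\
    (forall C, lam C != 0 -> min_N_cut N C) /\
    \sum_(C : {set E}) lam C = 1 /\
    forall i : player N, x i = \sum_(C : {set E}) lam C * incid N C i.

End Network.

From mathcomp Require Import all_boot all_order all_algebra.
From mathcomp Require Import boolp reals.
From mathcomp Require Import ring zify.
Import Order.TTheory GRing.Theory Num.Theory.
Set Implicit Arguments. Unset Strict Implicit. Unset Printing Implicit Defensive.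

(* Extend a core allocation [x] by 0 to the public arcs.  The core inequality for
   the private arcs of an s-t path [q] gives [x(q) >= 1], since [q] lies in the
   corresponding network, so the shortest-path distance [d] from [s] for the arc
   lengths [x], truncated at 1, has [d s = 0], [d t = 1] and
   [d (tgt e) <= d (src e) + x e].  For each value [l < 1] of [d], the arcs leaving
   [{v | d v <= l}] form an s-t cut constrained to N; weighting these level cuts by
   the gaps between consecutive values of [d] gives a convex combination of cuts
   bounded arc-wise by [x].  Every such cut has at least sigma_N arcs (weak duality)
   and [x] has total weight sigma_N, so all these inequalities are tight: [x] is the
   combination and every level cut is minimum.
   Conversely, a minimum cut has exactly sigma_N arcs by Menger's theorem, proved by
   augmenting integral flows with capacity 1 on the private arcs and unbounded
   capacity on the public ones, then decomposing a maximum flow into paths.  A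
   minimum cut also meets any family of arc-disjoint s-t paths of D_S in distinct
   arcs of S, so its incidence vector lies in the core, which is convex. *)

Section Walks.
Variables (V E : finType) (src tgt : E -> V).

Fixpoint walk (u : V) (p : seq E) (w : V) : bool :=
  if p is e :: p' then (src e == u) && walk (tgt e) p' w else u == w.

Lemma walk_to_tE t u p : walk_to_t src tgt t u p = walk u p t.
Proof. by elim: p u => //= e p IH u; rewrite IH. Qed.

Lemma walk_rcons u p e w : walk u (rcons p e) w = walk u p (src e) && (tgt e == w).
Proof. by elim: p u => /= [|e' p IH] u; rewrite ?IH ?andbA // eq_sym. Qed.

Lemma walk_leaves (A : pred V) u p w : walk u p w -> A u -> ~~ A w ->
  has (fun e => A (src e) && ~~ A (tgt e)) p.
Proof.
elim: p u => /= [|e p IH] u; first by move/eqP ->; move=> ->.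
case/andP => /eqP -> walk_p Au Aw.
by case: (boolP (A (tgt e))) => At; rewrite ?Au // (IH _ walk_p At Aw) orbT.
Qed.

Lemma walk_drop u p w i : walk u p w -> i < size p ->
  walk (nth u (map tgt p) i) (drop i.+1 p) w.
Proof.
elim: p u i => //= e p IH u [|i] /andP[_ walk_p] lt_i /=; first by rewrite drop0.
by rewrite (set_nth_default (tgt e)) ?size_map //; apply: IH.
Qed.

Lemma walk_shorten u p w : walk u p w ->
  exists2 q, walk u q w & uniq (u :: map tgt q) /\ subseq q p.
Proof.
elim: p u => [|e p IH] u; first by exists [::]; rewrite ?sub0seq.
case/andP => /eqP src_e /IH [q walk_q [uniq_q sub_qp]].
have sub_q : subseq q (e :: p) := subseq_trans sub_qp (subseq_cons _ _).
case: (boolP (u \in tgt e :: map tgt q)); last first.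
  move=> u_notin; exists (e :: q); first by rewrite /= src_e eqxx.
  by rewrite map_cons cons_uniq u_notin uniq_q /= eqxx.
rewrite in_cons => /orP [/eqP ->|u_in]; first by exists q.
set i := index u (map tgt q).
have lt_i : i < size q by rewrite -(size_map tgt) index_mem.
exists (drop i.+1 q); first by have := walk_drop walk_q lt_i; rewrite nth_index.
split; last exact: subseq_trans (drop_subseq _ _) sub_q.
have := drop_uniq i (proj2 (andP uniq_q)).
by rewrite (drop_nth u) ?size_map // nth_index // -map_drop.
Qed.

End Walks.

Lemma size_le_card_hitting (T : finType) (P : seq (seq T)) (C : {set T}) :
  (forall i, i < size P -> has (mem C) (nth [::] P i)) ->
  (forall i j e, i < size P -> j < size P -> e \in C ->
     e \in nth [::] P i -> e \in nth [::] P j -> i = j) ->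
  size P <= #|C|.
Proof.
move=> hit unique_hit.
have /fin_all_exists [f f_hit] : forall i : 'I_(size P),
    exists e, (e \in C) && (e \in nth [::] P i).
  by move=> i; have /hasP [e pi_e C_e] := hit i (ltn_ord i); exists e; apply/andP.
have f_inj : injective f.
  move=> i j fij; apply: val_inj.
  have /andP [C_fi Pi_fi] := f_hit i; have /andP [_ Pj_fj] := f_hit j.
  by apply: (unique_hit _ _ (f i) (ltn_ord i) (ltn_ord j) C_fi Pi_fi); rewrite fij.
rewrite -[size P]card_ord -(card_imset _ f_inj).
by apply/subset_leq_card/subsetP => _ /imsetP [i _ ->]; case/andP: (f_hit i).
Qed.

Lemma connect_uniq_path (T : finType) (e : rel T) x y : connect e x y ->
  exists2 p, path e x p & uniq (x :: p) /\ last x p = y.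
Proof. by case/connectP => p0 path_p0 ->; case/shortenP: path_p0 => p; exists p. Qed.

Lemma sum_mem_natr (R : pzSemiRingType) (T : finType) (A : {set T}) :
  (\sum_x (x \in A)%:R = #|A|%:R :> R)%R.
Proof.
rewrite -sum1_card natr_sum [RHS]big_mkcond.
by apply: eq_bigr => x _; case: (x \in A).
Qed.

Section WeakDuality.
Variables (V E : finType) (src tgt : E -> V) (s t : V) (N : {set E}).

Lemma sigmaN_le_card_cut C : N_cut src tgt s t N C -> sigmaN src tgt s t N <= #|C|.
Proof.
case=> sub_CN cut_C; apply/bigmax_leqP => k /asboolP [P [<- [paths disj]]].
apply: size_le_card_hitting => [i lt_i | i j e lt_i lt_j C_e Pi_e Pj_e].
  by apply: cut_C; apply: (allP paths); rewrite mem_nth.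
case: (eqVneq i j) => // /(disj i j lt_i lt_j) /pred0P /(_ e).
by rewrite /= !inE Pi_e Pj_e (subsetP sub_CN e C_e).
Qed.

Lemma gamma_le_card_cutI C S : N_cut src tgt s t N C ->
  gamma src tgt s t N S <= #|C :&: S|.
Proof.
case=> sub_CN cut_C; apply/bigmax_leqP => k /asboolP [P [<- [paths disj]]].
apply: size_le_card_hitting => [i lt_i | i j e lt_i lt_j].
  have /andP [path_i in_SM] := allP paths _ (mem_nth [::] lt_i).
  have /hasP [e Pi_e /= C_e] := cut_C _ path_i.
  apply/hasP; exists e; rewrite //= inE C_e.
  by have := allP in_SM e Pi_e; rewrite !inE (subsetP sub_CN e C_e) orbF.
move=> _ Pi_e Pj_e; case: (eqVneq i j) => // /(disj i j lt_i lt_j) /pred0P /(_ e).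
by rewrite /= Pi_e Pj_e.
Qed.

End WeakDuality.

Section Flows.
Variables (V E : finType) (src tgt : E -> V) (s t : V) (N : {set E}).
Local Open Scope ring_scope.

Definition excess (f : E -> int) (v : V) : int :=
  \sum_e f e * ((src e == v)%:R - (tgt e == v)%:R).

Definition feasible (f : E -> int) :=
  (forall e, 0 <= f e) /\ {in N, forall e, f e <= 1}.

Definition is_flow (f : E -> int) (k : nat) :=
  [/\ feasible f, forall v, v != s -> v != t -> excess f v = 0 & excess f s = k%:R].

Definition residual (f : E -> int) (u v : V) : bool :=
  [exists e, [&& src e == u, tgt e == v & (e \notin N) || (f e == 0)]
          || [&& tgt e == u, src e == v & 0 < f e]].

Definition carries (f : E -> int) (u v : V) : bool :=
  [exists e, [&& src e == u, tgt e == v & 0 < f e]].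

Lemma sum_eq_natr (A : {set V}) u : \sum_(v in A) (u == v)%:R = (u \in A)%:R :> int.
Proof.
case: (boolP (u \in A)) => A_u; last first.
  by rewrite big1 // => v A_v; case: eqP => // uv; rewrite uv A_v in A_u.
rewrite (bigD1 u) //= eqxx big1 ?addr0 // => v /andP [_ vu].
by rewrite eq_sym (negbTE vu).
Qed.

Lemma excess_set f (A : {set V}) :
  \sum_(v in A) excess f v = \sum_e f e * ((src e \in A)%:R - (tgt e \in A)%:R).
Proof.
rewrite exchange_big; apply: eq_bigr => e _.
by rewrite -mulr_sumr sumrB !sum_eq_natr.
Qed.

Lemma flow_across f k (A : {set V}) : is_flow f k -> s \in A -> t \notin A ->
  \sum_(v in A) excess f v = k%:R.
Proof.
case=> _ conserve value A_s A_t; rewrite (bigD1 s) //= value big1 ?addr0 //.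
move=> v /andP [A_v v_s]; apply: conserve => //.
by apply: contraNneq A_t => <-.
Qed.

Lemma excess_add_arc f e c v :
  excess (fun a => f a + c * (a == e)%:R) v =
  excess f v + c * ((src e == v)%:R - (tgt e == v)%:R).
Proof.
rewrite /excess; under eq_bigr => a _ do rewrite mulrDl.
rewrite big_split /=; congr (_ + _).
by rewrite (bigD1 e) //= eqxx mulr1 big1 ?addr0 // => a /negbTE ->; rewrite mulr0 mul0r.
Qed.

Lemma sum_walk_endpoints u q w v : walk src tgt u q w ->
  \sum_(e <- q) ((src e == v)%:R - (tgt e == v)%:R) = (u == v)%:R - (w == v)%:R :> int.
Proof.
elim: q u => [|e q IH] u /=; first by move/eqP ->; rewrite big_nil subrr.
by case/andP => /eqP <- /IH; rewrite big_cons => ->; rewrite addrA subrK.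
Qed.

Lemma excess_sub_walk f u q w v : walk src tgt u q w -> uniq q ->
  excess (fun a => f a - (a \in q)%:R) v = excess f v - ((u == v)%:R - (w == v)%:R).
Proof.
move=> walk_q uniq_q; rewrite /excess; under eq_bigr => a _ do rewrite mulrBl.
rewrite sumrB -(sum_walk_endpoints v walk_q) (big_uniq _ uniq_q).
congr (_ - _); rewrite [RHS]big_mkcond.
by apply: eq_bigr => a _; case: (a \in q); rewrite ?mul1r ?mul0r.
Qed.

Lemma augment_arc f u v : feasible f -> residual f u v -> u != v ->
  exists f', [/\ feasible f',
    forall x, excess f' x = excess f x + ((u == x)%:R - (v == x)%:R) &
    forall a, src a != u -> tgt a != u -> f' a = f a].
Proof.
move=> [f_ge0 f_le1] /existsP [e /orP [/and3P [/eqP src_e /eqP tgt_e cap_e]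
                                      | /and3P [/eqP tgt_e /eqP src_e pos_e]]] uv.
- exists (fun a => f a + 1 * (a == e)%:R); split.
  + split=> a; case: (eqVneq a e) => [->|_]; rewrite ?mulr1 ?mulr0 ?addr0 //.
    * by rewrite addr_ge0.
    * by case/orP: cap_e => [/negP N'e /N'e | /eqP ->].
    * exact: f_le1.
  + by move=> x; rewrite excess_add_arc mul1r src_e tgt_e.
  + move=> a a_u _; have /negbTE -> : a != e by apply: contraNneq a_u => ->; rewrite src_e.
    by rewrite mulr0 addr0.
- exists (fun a => f a + (-1) * (a == e)%:R); split.
  + split=> a; case: (eqVneq a e) => [->|_]; rewrite ?mulr1 ?mulr0 ?addr0 //.
    * by rewrite subr_ge0.
    * by move=> N_e; rewrite lerBlDr (le_trans (f_le1 _ N_e)) // lerDl.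
    * exact: f_le1.
  + by move=> x; rewrite excess_add_arc src_e tgt_e mulN1r opprB.
  + move=> a _ a_u; have /negbTE -> : a != e by apply: contraNneq a_u => ->; rewrite tgt_e.
    by rewrite mulr0 addr0.
Qed.

Lemma augment_path f u p : feasible f -> path (residual f) u p -> uniq (u :: p) ->
  exists2 f', feasible f' &
    forall x, excess f' x = excess f x + ((u == x)%:R - (last u p == x)%:R).
Proof.
elim: p u f => [|v p IH] u f feas_f /=.
  by move=> _ _; exists f => // x; rewrite subrr addr0.
case/andP => res_uv path_p /andP [u_notin uniq_p].
have uv : u != v by apply: contraNneq u_notin => ->; rewrite mem_head.
have [f1 [feas_f1 excess_f1 f1_off_u]] := augment_arc feas_f res_uv uv.
have path1 : path (residual f1) v p.
  apply: (sub_in_path (P := predC1 u)) path_p; last first.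
    apply/allP => x; rewrite in_cons => /orP [/eqP ->|p_x] /=; first by rewrite eq_sym.
    by apply: contraNneq u_notin => <-; rewrite in_cons p_x orbT.
  move=> x y; rewrite !inE => x_u y_u /existsP [a res_a]; apply/existsP; exists a.
  by case/orP: res_a => /and3P [/eqP src_a /eqP tgt_a cap_a];
    rewrite f1_off_u ?src_a ?tgt_a // !eqxx cap_a ?orbT.
have [f' feas_f' excess_f'] := IH v f1 feas_f1 path1 uniq_p.
by exists f' => // x; rewrite excess_f' excess_f1; ring.
Qed.

Lemma residual_closed_cut f k (A : {set V}) : is_flow f k -> s \in A -> t \notin A ->
  (forall u v, u \in A -> residual f u v -> v \in A) ->
  exists2 C, N_cut src tgt s t N C & #|C| = k.
Proof.
move=> flow_f A_s A_t closed; have [[f_ge0 f_le1] _ _] := flow_f.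
have leaving e : src e \in A -> tgt e \notin A -> (e \in N) && (f e == 1).
  move=> A_src; apply: contraNT => not_saturated; apply: (closed _ _ A_src).
  apply/existsP; exists e; rewrite !eqxx /=.
  case N_e: (e \in N) not_saturated => //= f_neq1.
  by have := f_le1 e N_e; have := f_ge0 e; move: f_neq1; lia.
have entering e : src e \notin A -> tgt e \in A -> f e = 0.
  move=> A_src A_tgt; apply/eqP; apply: contraNT A_src => f_neq0.
  apply: (closed _ _ A_tgt); apply/existsP; exists e.
  by rewrite !eqxx orbC /= lt_def f_neq0 f_ge0.
exists [set e | (src e \in A) && (tgt e \notin A)].
  split.
    apply/subsetP => e; rewrite inE => /andP [A_src A_tgt].
    by case/andP: (leaving e A_src A_tgt).
  move=> p /andP [walk_p _]; rewrite walk_to_tE in walk_p.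
  by apply/sub_has: (walk_leaves walk_p A_s A_t) => e; rewrite /= inE.
apply/eqP; rewrite -(eqr_nat int) -(flow_across flow_f A_s A_t) excess_set -sum_mem_natr.
apply/eqP/eq_bigr => e _; rewrite inE.
case: (boolP (src e \in A)) => A_src; case: (boolP (tgt e \in A)) => A_tgt /=;
  rewrite ?subrr ?mulr0 ?subr0 ?sub0r ?mulr1 ?mulrN1 //.
- by case/andP: (leaving e A_src A_tgt) => _ /eqP ->.
- by rewrite entering // oppr0.
Qed.

Lemma flow_increase f k : s != t -> is_flow f k ->
  (forall C, N_cut src tgt s t N C -> (k < #|C|)%N) -> exists f', is_flow f' k.+1.
Proof.
move=> s_neq_t flow_f big_cuts; have [feas_f conserve value] := flow_f.
set A := [set v | connect (residual f) s v].
have A_s : s \in A by rewrite inE connect0.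
case: (boolP (t \in A)) => A_t; last first.
  have [|C cut_C card_C] := residual_closed_cut flow_f A_s A_t.
    by move=> u v; rewrite !inE => s_u res_uv; apply: connect_trans s_u (connect1 res_uv).
  by have := big_cuts C cut_C; rewrite card_C ltnn.
move: A_t; rewrite inE => /connect_uniq_path [p path_p [uniq_p t_last]].
have [f' feas_f' excess_f'] := augment_path feas_f path_p uniq_p.
exists f'; split=> // [v v_s v_t|].
  by rewrite excess_f' conserve // t_last eq_sym (negbTE v_s) eq_sym (negbTE v_t) subrr.
by rewrite excess_f' value t_last eqxx eq_sym (negbTE s_neq_t) subr0 -natrD addn1.
Qed.

Lemma flow_reaches_t f k : is_flow f k.+1 -> connect (carries f) s t.
Proof.
move=> flow_f; have [[f_ge0 _] _ _] := flow_f.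
set A := [set v | connect (carries f) s v].
have A_s : s \in A by rewrite inE connect0.
apply/negPn/negP => not_reach; have A_t : t \notin A by rewrite inE.
have := flow_across flow_f A_s A_t; rewrite excess_set => value.
suff : \sum_e f e * ((src e \in A)%:R - (tgt e \in A)%:R) <= 0 by rewrite value leNgt ltr0Sn.
apply: sumr_le0 => e _.
case: (boolP (src e \in A)) => A_src; case: (boolP (tgt e \in A)) => A_tgt /=;
  rewrite ?subrr ?mulr0 ?subr0 ?sub0r ?mulr1 ?mulrN1 ?oppr_le0 //.
rewrite leNgt; apply: contra A_tgt => pos_e; rewrite /A !inE in A_src *.
apply: (connect_trans A_src); apply: connect1.
by apply/existsP; exists e; rewrite !eqxx.
Qed.

Lemma carries_path_arcs f u p : path (carries f) u p ->
  exists q, [/\ walk src tgt u q (last u p), map tgt q = p & all (fun e => 0 < f e) q].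
Proof.
elim: p u => [|v p IH] u /=; first by exists [::]; rewrite /= eqxx.
case/andP => /existsP [e /and3P [/eqP src_e /eqP tgt_e pos_e]] /IH [q [walk_q map_q pos_q]].
by exists (e :: q); rewrite /= src_e eqxx tgt_e walk_q map_q pos_e pos_q.
Qed.

Lemma flow_carrying_path f k : is_flow f k.+1 ->
  exists2 q, st_path src tgt s t q & all (fun e => 0 < f e) q.
Proof.
move=> /flow_reaches_t /connect_uniq_path [p path_p [uniq_p p_last]].
have [q [walk_q map_q pos_q]] := carries_path_arcs path_p.
by exists q; rewrite // /st_path walk_to_tE map_q -p_last walk_q.
Qed.

Lemma flow_sub_path f k q : s != t -> is_flow f k.+1 ->
  st_path src tgt s t q -> all (fun e => 0 < f e) q ->
  is_flow (fun a => f a - (a \in q)%:R) k.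
Proof.
move=> s_neq_t [[f_ge0 f_le1] conserve value] /andP [walk_q uniq_q] pos_q.
rewrite walk_to_tE in walk_q; have {}uniq_q : uniq q.
  by case/andP: uniq_q => _ /map_uniq.
split; first split.
- move=> a; case: (boolP (a \in q)) => [q_a | _]; rewrite ?subr0 //=.
  by have := allP pos_q a q_a; lia.
- by move=> a N_a; rewrite lerBlDr (le_trans (f_le1 a N_a)) // lerDl.
- move=> v v_s v_t; rewrite (excess_sub_walk _ _ walk_q uniq_q) conserve //.
  by rewrite eq_sym (negbTE v_s) eq_sym (negbTE v_t) subrr.
- rewrite (excess_sub_walk f s walk_q uniq_q) value eqxx eq_sym (negbTE s_neq_t) subr0.
  by rewrite -addn1 natrD addrK.
Qed.

Definition N_disjoint (P : seq (seq E)) :=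
  forall i j, (i < size P)%N -> (j < size P)%N -> i != j ->
    [disjoint [predI mem (nth [::] P i) & mem N] & [predI mem (nth [::] P j) & mem N]].

Lemma flow_decompose f k : s != t -> is_flow f k -> exists P, [/\ size P = k,
  all (st_path src tgt s t) P, N_disjoint P &
  forall p e, p \in P -> e \in p -> e \in N -> 0 < f e].
Proof.
move=> s_neq_t; elim: k f => [|k IH] f flow_f; first by exists [::]; split => //; case.
have [[f_ge0 f_le1] _ _] := flow_f.
have [q path_q pos_q] := flow_carrying_path flow_f.
have [P [size_P paths_P disj_P pos_P]] := IH _ (flow_sub_path s_neq_t flow_f path_q pos_q).
have avoid_q p e : p \in P -> e \in p -> e \in N -> e \notin q.
  move=> P_p p_e N_e; apply/negP => q_e; have := pos_P p e P_p p_e N_e.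
  by rewrite q_e; have := f_le1 e N_e; lia.
have disj_q p : p \in P -> [disjoint [predI mem q & mem N] & [predI mem p & mem N]].
  move=> P_p; apply/pred0P => e /=; apply/negbTE/negP.
  move=> /andP [/andP [q_e N_e] /andP [p_e _]].
  by have := avoid_q p e P_p p_e N_e; rewrite q_e.
exists (q :: P); split => /=; [by rewrite size_P | by rewrite path_q paths_P | |].
- move=> [|i] [|j] //= lt_i lt_j neq_ij.
  + exact/disj_q/mem_nth.
  + by rewrite disjoint_sym; apply/disj_q/mem_nth.
  + exact: disj_P.
- move=> p e; rewrite in_cons => /predU1P [-> q_e _ | P_p p_e N_e]; first exact: (allP pos_q).
  by have := pos_P p e P_p p_e N_e; lia.
Qed.

Lemma menger k : s != t -> (forall C, N_cut src tgt s t N C -> (k <= #|C|)%N) ->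
  has_N_disjoint_paths src tgt s t N k.
Proof.
move=> s_neq_t big_cuts.
have flows j : (j <= k)%N -> exists f, is_flow f j.
  elim: j => [|j IH] le_jk.
    have excess0 v : excess (fun=> 0) v = 0 by rewrite /excess big1 // => e _; rewrite mul0r.
    by exists (fun=> 0); split=> [|v _ _|]; rewrite ?excess0.
  have [f flow_f] := IH (ltnW le_jk).
  by apply: flow_increase s_neq_t flow_f _ => C /big_cuts; apply: leq_trans.
have [f /(flow_decompose s_neq_t) [P [size_P paths_P disj_P _]]] := flows k (leqnn k).
by exists P.
Qed.

End Flows.

Section ShortestDistance.
Local Open Scope ring_scope.
Variables (R : realType) (V E : finType) (src tgt : E -> V) (s : V) (w : E -> R).
Hypothesis w_ge0 : forall e, 0 <= w e.

Definition weight (p : seq E) : R := \sum_(e <- p) w e.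

Lemma weight_ge0 p : 0 <= weight p.
Proof. by apply: sumr_ge0 => e _; apply: w_ge0. Qed.

Lemma weight_rcons p e : weight (rcons p e) = weight p + w e.
Proof. by rewrite /weight -cats1 big_cat big_seq1. Qed.

Lemma weight_subseq q p : subseq q p -> weight q <= weight p.
Proof.
elim: p q => [|e p IH] [|e' q] //=; first by rewrite /weight big_nil weight_ge0.
case: eqP => [-> /IH|_ /IH le_qp]; first by rewrite /weight !big_cons lerD2l.
by apply: le_trans le_qp _; rewrite [weight (e :: p)]/weight big_cons lerDr.
Qed.

(* Bellman-Ford: the minimum of 1 and of the weights of the walks from [s] to [v]
   with at most [k] arcs. *)
Fixpoint trunc_dist (k : nat) (v : V) : R :=
  if k is k'.+1 then
    \big[Num.min/trunc_dist k' v]_(e | tgt e == v) (trunc_dist k' (src e) + w e)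
  else (v != s)%:R.

Lemma trunc_dist_ge0 k v : 0 <= trunc_dist k v.
Proof.
elim: k v => [|k IH] v /=; first by case: (v != s).
by apply: le_bigmin => // e _; rewrite addr_ge0.
Qed.

Lemma trunc_dist_le1 k v : trunc_dist k v <= 1.
Proof.
elim: k v => [|k IH] v /=; first by case: (v != s).
exact: le_trans (bigmin_le_id _ _ _ _) (IH v).
Qed.

Lemma trunc_dist_s k : trunc_dist k s = 0.
Proof.
elim: k => [|k IH]; first by rewrite /= eqxx.
apply/eqP; rewrite eq_le trunc_dist_ge0 andbT /= -[X in _ <= X]IH.
exact: bigmin_le_id.
Qed.

Lemma trunc_dist_witness k v : trunc_dist k v < 1 ->
  exists2 p, walk src tgt s p v & weight p <= trunc_dist k v.
Proof.
elim: k v => [|k IH] v /=.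
  case: (eqVneq v s) => [-> _|_]; last by rewrite ltxx.
  by exists [::]; rewrite /= ?eqxx // /weight big_nil.
case/bigmin_leP: (lexx (trunc_dist k.+1 v)) => [le_kv | [e /eqP tgt_e le_ev]] lt_1.
  have [p walk_p le_p] := IH v (le_lt_trans le_kv lt_1).
  by exists p; rewrite // (le_trans le_p).
have [|p walk_p le_p] := IH (src e).
  by apply: le_lt_trans lt_1; apply: le_trans le_ev; rewrite lerDl.
exists (rcons p e); first by rewrite walk_rcons walk_p tgt_e eqxx.
by rewrite weight_rcons (le_trans _ le_ev) // lerD2r.
Qed.

Lemma trunc_dist_le_weight k v p : walk src tgt s p v -> (size p <= k)%N ->
  trunc_dist k v <= weight p.
Proof.
elim: k v p => [|k IH] v p.
  by case: p => //= /eqP <- _; rewrite eqxx /weight big_nil.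
case/lastP: p => [/eqP <- _|p e]; first by rewrite trunc_dist_s /weight big_nil.
rewrite walk_rcons size_rcons ltnS => /andP [walk_p /eqP <-] size_p.
have step : trunc_dist k.+1 (tgt e) <= trunc_dist k (src e) + w e.
  exact: bigmin_le_cond.
by apply: le_trans step _; rewrite weight_rcons lerD2r; apply: IH.
Qed.

Definition dist (v : V) : R := trunc_dist #|V| v.

Lemma dist_le_weight v p : walk src tgt s p v -> dist v <= weight p.
Proof.
case/walk_shorten => q walk_q [uniq_q sub_qp].
apply: le_trans (weight_subseq sub_qp); apply: trunc_dist_le_weight walk_q _.
by have := max_card (mem (s :: map tgt q)); rewrite (card_uniqP uniq_q) /= size_map => /ltnW.
Qed.

Lemma dist_tgt_le e : dist (tgt e) <= dist (src e) + w e.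
Proof.
case: (ltP (dist (src e)) 1) => [/trunc_dist_witness [p walk_p le_p] | le_1].
  apply: le_trans (dist_le_weight (p := rcons p e) _) _.
    by rewrite walk_rcons walk_p eqxx.
  by rewrite weight_rcons lerD2r.
by rewrite (le_trans (trunc_dist_le1 _ _)) // (le_trans le_1) // lerDl.
Qed.

Lemma dist_t_eq1 t : (forall q, st_path src tgt s t q -> 1 <= weight q) -> dist t = 1.
Proof.
move=> heavy; apply/eqP; rewrite eq_le trunc_dist_le1 leNgt; apply/negP => lt_1.
have [p /walk_shorten [q walk_q [uniq_q sub_qp]] le_p] := trunc_dist_witness lt_1.
have := heavy q; rewrite /st_path walk_to_tE walk_q uniq_q => /(_ isT) le_1q.
by have := le_trans le_1q (le_trans (weight_subseq sub_qp) le_p); rewrite leNgt lt_1.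
Qed.

End ShortestDistance.

Lemma telescope_sumr_window (M : zmodType) (f : nat -> M) n a b : a <= b <= n ->
  (\sum_(j < n | (a <= j < b)%N) (f j.+1 - f j) = f b - f a)%R.
Proof.
case/andP=> le_ab le_bn.
rewrite -(big_mkord (fun j => a <= j < b) (fun j => f j.+1 - f j)%R).
rewrite -(big_nat_widen 0 b n) // -telescope_sumr //.
rewrite (big_cat_nat (leq0n a) le_ab) /= big_nat_cond big_pred0 => [|j]; last first.
  by rewrite andbC; case: (leqP a j).
rewrite add0r [RHS]big_nat_cond big_nat_cond; apply: eq_bigl => j.
by case: (a <= j); rewrite /= ?andbT.
Qed.

Section LevelCuts.
Local Open Scope ring_scope.
Variables (R : realType) (V E : finType) (src tgt : E -> V) (s t : V) (d : V -> R).
Hypotheses (d_s : d s = 0) (d_t : d t = 1).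
Hypotheses (d_ge0 : forall v, 0 <= d v) (d_le1 : forall v, d v <= 1).

Definition levels : seq R := sort <=%R (undup [seq d v | v <- enum V]).
Definition level (j : nat) : R := nth 0 levels j.
Definition level_rank (v : V) : nat := index (d v) levels.
Definition gap (j : nat) : R := level j.+1 - level j.
Definition level_cut (j : nat) : {set E} :=
  [set e | (d (src e) <= level j) && (level j < d (tgt e))].

Local Notation nlevels := (size levels).
Local Notation ngaps := (size levels).-1.

Lemma mem_levels v : d v \in levels.
Proof. by rewrite mem_sort mem_undup; apply: map_f; rewrite mem_enum. Qed.

Lemma level_rank_lt v : (level_rank v < nlevels)%N.
Proof. by rewrite index_mem mem_levels. Qed.

Lemma level_rankK v : level (level_rank v) = d v.
Proof. by rewrite /level nth_index ?mem_levels. Qed.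

Lemma nlevels_gt0 (v : V) : (0 < nlevels)%N.
Proof. exact: leq_ltn_trans (leq0n _) (level_rank_lt v). Qed.

Lemma ngaps_lt (v : V) : (ngaps < nlevels)%N.
Proof. by rewrite prednK ?(nlevels_gt0 v). Qed.

Lemma level_ltn i j : (i < nlevels)%N -> (j < nlevels)%N -> (level i < level j) = (i < j)%N.
Proof. by apply: lt_sorted_ltn_nth; rewrite sort_lt_sorted undup_uniq. Qed.

Lemma level_leq i j : (i < nlevels)%N -> (j < nlevels)%N -> (level i <= level j) = (i <= j)%N.
Proof. by apply: lt_sorted_leq_nth; rewrite sort_lt_sorted undup_uniq. Qed.

Lemma level_range j : (j < nlevels)%N -> 0 <= level j <= 1.
Proof.
by move=> lt_j; have /mapP [v _ ->] : level j \in [seq d v | v <- enum V];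
  rewrite ?d_ge0 ?d_le1 // -mem_undup -(mem_sort <=%R) mem_nth.
Qed.

Lemma level_first : level 0 = 0.
Proof.
apply/eqP; rewrite eq_le; have /andP [-> _] := level_range (nlevels_gt0 s).
by rewrite -d_s -level_rankK level_leq ?(nlevels_gt0 s) ?level_rank_lt.
Qed.

Lemma level_last : level ngaps = 1.
Proof.
apply/eqP; rewrite eq_le; have /andP [_ ->] := level_range (ngaps_lt t).
rewrite -d_t -level_rankK level_leq ?(ngaps_lt t) ?level_rank_lt //.
by rewrite -ltnS prednK ?(nlevels_gt0 t) ?level_rank_lt.
Qed.

Lemma gap_index_lt (j : 'I_ngaps) : (j.+1 < nlevels)%N.
Proof. by case: nlevels j => [[]|n []]. Qed.

Lemma gap_gt0 (j : 'I_ngaps) : 0 < gap j.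
Proof. by rewrite subr_gt0 level_ltn ?gap_index_lt // ltnW ?gap_index_lt. Qed.

Lemma sum_gap : \sum_(j < ngaps) gap j = 1.
Proof. by rewrite -(big_mkord xpredT gap) telescope_sumr // level_last level_first subr0. Qed.

Lemma mem_level_cut e (j : 'I_ngaps) :
  (e \in level_cut j) = (level_rank (src e) <= j < level_rank (tgt e))%N.
Proof.
have lt_j := ltnW (gap_index_lt j).
by rewrite inE -level_rankK -[d (tgt e)]level_rankK level_leq ?level_ltn ?level_rank_lt.
Qed.

Lemma level_cut_meets (j : 'I_ngaps) p : st_path src tgt s t p -> has (mem (level_cut j)) p.
Proof.
have lt_j := gap_index_lt j.
case/andP => walk_p _; rewrite walk_to_tE in walk_p.
have /= := walk_leaves (A := fun v => d v <= level j) walk_p.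
rewrite d_s d_t; have /andP [-> _] := level_range (ltnW lt_j).
rewrite -ltNge -level_last (level_ltn (ltnW lt_j) (ngaps_lt s)) ltn_ord => /(_ isT isT).
by apply: sub_has => e /andP [le_src lt_tgt]; rewrite /= inE le_src ltNge.
Qed.

Lemma sum_gap_level_cut_le e c : 0 <= c -> d (tgt e) <= d (src e) + c ->
  \sum_(j < ngaps | e \in level_cut j) gap j <= c.
Proof.
move=> c_ge0 le_c; under eq_bigl => j do rewrite mem_level_cut.
case: (leqP (level_rank (tgt e)) (level_rank (src e))) => [le_ts | lt_st].
  rewrite big_pred0 // => j; case: (leqP (level_rank (src e)) j) => //= le_sj.
  by rewrite ltnNge (leq_trans le_ts le_sj).
rewrite /gap telescope_sumr_window; first by rewrite !level_rankK lerBlDl.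
by rewrite (ltnW lt_st) -ltnS prednK ?(nlevels_gt0 (tgt e)) ?level_rank_lt.
Qed.

End LevelCuts.

Section MinCutDecomposition.
Local Open Scope ring_scope.
Variables (R : realType) (V E : finType) (src tgt : E -> V) (s t : V).
Variables (N : {set E}) (w : E -> R).
Hypotheses (w_ge0 : forall e, 0 <= w e) (w_public : forall e, e \notin N -> w e = 0).
Hypothesis heavy_paths : forall q, st_path src tgt s t q -> 1 <= weight w q.
Hypothesis w_total : \sum_e w e = (sigmaN src tgt s t N)%:R.

Let d := dist src tgt s w.
Let cut := level_cut src tgt d.
Local Notation ngaps := (size (levels d)).-1.
Local Notation sigma := (sigmaN src tgt s t N).

Let d_s : d s = 0. Proof. exact: trunc_dist_s. Qed.
Let d_t : d t = 1. Proof. exact: dist_t_eq1. Qed.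
Let d_ge0 v : 0 <= d v. Proof. exact: trunc_dist_ge0. Qed.
Let d_le1 v : d v <= 1. Proof. exact: trunc_dist_le1. Qed.

Lemma level_cut_N_cut (j : 'I_ngaps) : N_cut src tgt s t N (cut j).
Proof.
split=> [|p]; last exact: level_cut_meets.
apply/subsetP => e; rewrite inE => /andP [le_src lt_tgt].
case: (boolP (e \in N)) => // N'e.
have := dist_tgt_le src tgt s w_ge0 e; rewrite -/d w_public // addr0 => le_d.
by have := lt_le_trans lt_tgt (le_trans le_d le_src); rewrite ltxx.
Qed.

Lemma crossing_le_weight e : \sum_(j < ngaps) gap d j * (e \in cut j)%:R <= w e.
Proof.
under eq_bigr => j _ do rewrite mulr_natr mulrb.
by rewrite -big_mkcond; apply: sum_gap_level_cut_le (dist_tgt_le _ _ _ w_ge0 e).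
Qed.

Lemma level_cuts_tight :
  (forall e, \sum_(j < ngaps) gap d j * (e \in cut j)%:R = w e) /\
  (forall j : 'I_ngaps, #|cut j| = sigma).
Proof.
have le_cut (j : 'I_ngaps) : gap d j * sigma%:R <= gap d j * #|cut j|%:R.
  by rewrite ler_pM2l ?gap_gt0 // ler_nat; apply/sigmaN_le_card_cut/level_cut_N_cut.
have sum_sigma : \sum_(j < ngaps) gap d j * sigma%:R = \sum_e w e.
  by rewrite -mulr_suml (sum_gap d_s d_t d_ge0 d_le1) mul1r w_total.
have sum_crossing : \sum_e \sum_(j < ngaps) gap d j * (e \in cut j)%:R =
                    \sum_(j < ngaps) gap d j * #|cut j|%:R.
  by rewrite exchange_big; apply: eq_bigr => j _; rewrite -mulr_sumr sum_mem_natr.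
have le_cuts := leif_sum (fun j (_ : true) => leif_eq (le_cut j)).
have le_weights := leif_sum (fun e (_ : true) => leif_eq (crossing_le_weight e)).
have eq_weights : \sum_e \sum_(j < ngaps) gap d j * (e \in cut j)%:R = \sum_e w e.
  apply/le_anti; rewrite (leif_le le_weights) -[X in X <= _]sum_sigma sum_crossing.
  exact: leif_le le_cuts.
split=> [e | j].
  by have := le_weights.2; rewrite eq_weights eqxx => /esym/forall_inP/(_ e isT)/eqP.
have := le_cuts.2; rewrite sum_sigma -eq_weights sum_crossing eqxx.
move=> /esym/forall_inP/(_ j isT)/eqP eq_j; apply/eqP.
by rewrite -(eqr_nat R) -(inj_eq (mulfI (lt0r_neq0 (gap_gt0 j)))) -eq_j.
Qed.

Lemma min_cut_decomposition : exists lam : {set E} -> R,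
  [/\ forall C, 0 <= lam C, forall C, lam C != 0 -> min_N_cut src tgt s t N C,
      \sum_C lam C = 1 & forall e, w e = \sum_C lam C * (e \in C)%:R].
Proof.
have [crossing_eq card_cut] := level_cuts_tight.
exists (fun C => \sum_(j < ngaps | cut j == C) gap d j); split.
- by move=> C; apply: sumr_ge0 => j _; apply/ltW/gap_gt0.
- move=> C nz_C; case: (pickP (fun j : 'I_ngaps => cut j == C)) => [j /eqP <- | no_j].
    split=> [|C' cut_C']; first exact: level_cut_N_cut.
    by rewrite card_cut sigmaN_le_card_cut.
  by rewrite big_pred0 ?eqxx in nz_C.
- by rewrite -(sum_gap d_s d_t d_ge0 d_le1) (partition_big (fun j : 'I_ngaps => cut j) xpredT).
- move=> e; rewrite -crossing_eq (partition_big (fun j : 'I_ngaps => cut j) xpredT) //=.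
  apply: eq_bigr => C _; rewrite mulr_suml; apply: eq_bigr => j /eqP <-.
  by case: (e \in cut j).
Qed.

End MinCutDecomposition.

Section Core.
Local Open Scope ring_scope.
Variables (R : realType) (V E : finType) (src tgt : E -> V) (s t : V) (N : {set E}).
Hypothesis s_neq_t : s != t.
Local Notation sigma := (sigmaN src tgt s t N).

Lemma sum_player (F : E -> R) (S : {set E}) :
  \sum_(i : player N | val i \in S) F (val i) = \sum_(e in S :&: N) F e.
Proof.
rewrite big_mkcond /= -(big_sub (mem N) (fun e => if e \in S then F e else 0)).
by rewrite -big_mkcondr; apply: eq_bigl => e; rewrite inE andbC.
Qed.

Definition arc_weight (x : {ffun player N -> R}) (e : E) : R :=
  if insub e is Some i then x i else 0.

Lemma arc_weight_val x (i : player N) : arc_weight x (val i) = x i.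
Proof. by rewrite /arc_weight valK. Qed.

Lemma arc_weight_public x e : e \notin N -> arc_weight x e = 0.
Proof. by move=> N'e; rewrite /arc_weight insubN. Qed.

Lemma xsumE x S : xsum x S = \sum_(e in S :&: N) arc_weight x e.
Proof. by rewrite -sum_player; apply: eq_bigr => i _; rewrite arc_weight_val. Qed.

Lemma xsum_incid (C S : {set E}) : xsum (incid R N C) S = #|C :&: (S :&: N)|%:R.
Proof.
rewrite /xsum (eq_bigr (fun i => (val i \in C)%:R)) => [|i _]; last first.
  by rewrite ffunE; case: (val i \in C).
rewrite (sum_player (fun e => (e \in C)%:R)) -sum_mem_natr big_mkcond.
apply: eq_bigr => e _.
by rewrite [e \in C :&: _]inE; case: (e \in C); case: (e \in S :&: N).
Qed.

Lemma weight_arc_weight x q : uniq q ->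
  weight (arc_weight x) q = xsum x ([set e in q] :&: N).
Proof.
move=> uniq_q; rewrite xsumE -setIA setIid /weight (big_uniq _ uniq_q).
rewrite (eq_bigl (mem [set e in q])) => [|e]; last by rewrite !inE.
rewrite (big_setID N) /= [X in _ + X]big1 ?addr0 // => e.
by rewrite inE => /andP [N'e _]; apply: arc_weight_public.
Qed.

Lemma gamma_tilde_gt0 S q : st_path src tgt s t q -> {subset q <= S :|: ~: N} ->
  (0 < gamma_tilde src tgt s t N S)%N.
Proof.
case: q => [|e q] path_q q_SM; first by move: path_q; rewrite /st_path /= (negbTE s_neq_t).
have lt_1E : (1 < #|E|.+1)%N by rewrite ltnS; apply/card_gt0P; exists e.
rewrite /gamma_tilde; case: eqP => _;
  apply: leq_trans (leq_bigmax_cond (Ordinal lt_1E) _) => //; apply/asboolP;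
  exists [:: e :: q]; (split; [done | split; [| by move=> [|i] [|j]]]).
- by rewrite /= path_q.
- by rewrite /= andbT /st_path_in path_q; apply/allP.
Qed.

Lemma card_min_N_cut C : min_N_cut src tgt s t N C -> #|C| = sigma.
Proof.
case=> cut_C min_C; apply/eqP; rewrite eqn_leq sigmaN_le_card_cut // andbT.
have lt_CE : (#|C| < #|E|.+1)%N by rewrite ltnS max_card.
apply: leq_trans (leq_bigmax_cond (Ordinal lt_CE) _) => //; apply/asboolP.
exact: menger.
Qed.

Lemma core_sub_conv (x : {ffun player N -> R}) :
  in_core src tgt s t x -> in_conv_min_cuts src tgt s t x.
Proof.
case=> x_ge0 [x_total x_core].
have w_ge0 e : 0 <= arc_weight x e by rewrite /arc_weight; case: insub.
have heavy q : st_path src tgt s t q -> 1 <= weight (arc_weight x) q.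
  move=> path_q; have /andP [_ /andP [_ /map_uniq uniq_q]] := path_q.
  rewrite weight_arc_weight //; apply: le_trans (x_core _ (subsetIr _ _)).
  rewrite ler1n; apply: gamma_tilde_gt0 path_q _ => e q_e.
  by rewrite !inE q_e orbN.
have w_total : \sum_e arc_weight x e = sigma%:R.
  rewrite -x_total xsumE setIid [RHS]big_mkcond; apply: eq_bigr => e _.
  by case: (boolP (e \in N)) => // /arc_weight_public.
have [lam [lam_ge0 lam_min lam_sum lam_w]] :=
  min_cut_decomposition w_ge0 (@arc_weight_public x) heavy w_total.
exists lam; do 3!split=> //; move=> i.
rewrite -arc_weight_val lam_w; apply: eq_bigr => C _.
by rewrite ffunE; case: (val i \in C).
Qed.

Lemma gamma_tilde_le_card_min_cutI C S : min_N_cut src tgt s t N C ->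
  (gamma_tilde src tgt s t N S <= #|C :&: S|)%N.
Proof.
move=> min_C; rewrite /gamma_tilde; case: eqP => [-> | _].
  by rewrite (setIidPl min_C.1.1) card_min_N_cut.
exact: gamma_le_card_cutI min_C.1.
Qed.

Lemma xsum_comb (x : {ffun player N -> R}) (lam : {set E} -> R) S :
  (forall i, x i = \sum_C lam C * incid R N C i) ->
  xsum x S = \sum_C lam C * #|C :&: (S :&: N)|%:R.
Proof.
move=> x_comb; rewrite /xsum (eq_bigr _ (fun i _ => x_comb i)) exchange_big /=.
by apply: eq_bigr => C _; rewrite -mulr_sumr -xsum_incid.
Qed.

Lemma conv_sub_core (x : {ffun player N -> R}) :
  in_conv_min_cuts src tgt s t x -> in_core src tgt s t x.
Proof.
case=> lam [lam_ge0 [lam_min [lam_sum x_comb]]].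
have xsum_min_cuts S : xsum x S = \sum_C lam C * #|C :&: S|%:R.
  rewrite (xsum_comb S x_comb); apply: eq_bigr => C _.
  have [-> | /lam_min [[sub_CN _] _]] := eqVneq (lam C) 0; first by rewrite !mul0r.
  by rewrite setIA (setIidPl (subset_trans (subsetIl _ _) sub_CN)).
have sum_lam (n : nat) : \sum_C lam C * n%:R = n%:R by rewrite -mulr_suml lam_sum mul1r.
split; [|split].
- move=> i; rewrite x_comb; apply: sumr_ge0 => C _.
  by rewrite ffunE mulr_ge0 //; case: (val i \in C).
- rewrite xsum_min_cuts -[RHS]sum_lam; apply: eq_bigr => C _.
  have [-> | /lam_min min_C] := eqVneq (lam C) 0; first by rewrite !mul0r.
  by rewrite (setIidPl min_C.1.1) card_min_N_cut.
move=> S _; rewrite xsum_min_cuts -(sum_lam (gamma_tilde src tgt s t N S)).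
apply: ler_sum => C _; have [-> | /lam_min min_C] := eqVneq (lam C) 0.
  by rewrite !mul0r.
by apply: ler_wpM2l => //; rewrite ler_nat gamma_tilde_le_card_min_cutI.
Qed.

End Core.

Theorem lemma6 (R : realType) (V E : finType) (src tgt : E -> V) (s t : V)
    (N : {set E})
    (hN : forall p, st_path src tgt s t p -> has (mem N) p)
    (hE : forall e : E, exists2 p, st_path src tgt s t p & e \in p) :
  forall x : {ffun player N -> R},
    in_core src tgt s t x <-> in_conv_min_cuts src tgt s t x.
Proof.
have s_neq_t : s != t.
  by apply/eqP => s_t; move: (hN [::]); rewrite /st_path /= s_t eqxx => /(_ isT).
by move=> x; split; [apply: core_sub_conv | apply: conv_sub_core].
Qed.
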